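(* For every $N\in\mathbb{N}$, every $f\in\mathcal{E}_N$, every $0<\delta\le1$ and every $\beta\in\mathbb{N}^n$, $$\|\partial_x^\beta f\|_{L^2(\mathbb{R}^n)}\le e^{\frac{e}{2\delta^2}}(2\delta)^{|\beta|}|\beta|!\,e^{\delta^{-1}\sqrt{N}}\|f\|_{L^2(\mathbb{R}^n)}.$$
   Context: The one-dimensional Hermite functions are $\phi_k(x)=\frac{(-1)^k}{\sqrt{2^k k!\sqrt{\pi}}}e^{x^2/2}\frac{d^k}{dx^k}(e^{-x^2})$, $k\in\mathbb{N}$. For $\alpha\in\mathbb{N}^n$, $\Phi_\alpha(x)=\prod_{j=1}^n\phi_{\alpha_j}(x_j)$ and $|\alpha|=\alpha_1+\dots+\alpha_n$. $\mathcal{E}_N=\mathrm{Span}_{\mathbb{C}}\{\Phi_\alpha:|\alpha|\le N\}$; $\partial_x^\beta=\partial_{x_1}^{\beta_1}\cdots\partial_{x_n}^{\beta_n}$. *)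

From Stdlib Require Export Reals List ClassicalEpsilon Arith Factorial.
Open Scope R_scope.

(** Classical (total) derivative of a real function at a point:
    the value l with derivable_pt_lim f x l if it exists, 0 otherwise. *)
Definition deriv (f : R -> R) (x : R) : R :=
  match excluded_middle_informative (exists l, derivable_pt_lim f x l) with
  | left H => proj1_sig (constructive_indefinite_description _ H)
  | right _ => 0
  end.

Fixpoint nderiv (k : nat) (f : R -> R) : R -> R :=
  match k with
  | O => f
  | S k' => deriv (nderiv k' f)
  end.

Definition hermite (k : nat) (x : R) : R :=
  (-1) ^ k / sqrt (2 ^ k * INR (fact k) * sqrt PI)
  * exp (x ^ 2 / 2) * nderiv k (fun y => exp (- y ^ 2)) x.

(** Points of R^n are x : nat -> R (only coordinates 0..n-1 matter);
    multi-indices in N^n are a : nat -> nat (only entries 0..n-1 matter). *)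

Fixpoint mabs (n : nat) (a : nat -> nat) : nat :=
  match n with
  | O => O
  | S n' => (mabs n' a + a n')%nat
  end.

Fixpoint Phi (n : nat) (a : nat -> nat) (x : nat -> R) : R :=
  match n with
  | O => 1
  | S n' => Phi n' a x * hermite (a n') (x n')
  end.

Definition upd (x : nat -> R) (j : nat) (t : R) : nat -> R :=
  fun i => if Nat.eqb i j then t else x i.

Definition pderiv (j : nat) (F : (nat -> R) -> R) : (nat -> R) -> R :=
  fun x => deriv (fun t => F (upd x j t)) (x j).

Fixpoint pderiv_iter (j k : nat) (F : (nat -> R) -> R) : (nat -> R) -> R :=
  match k with
  | O => F
  | S k' => pderiv j (pderiv_iter j k' F)
  end.

Fixpoint dmulti (n : nat) (b : nat -> nat) (F : (nat -> R) -> R)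
  : (nat -> R) -> R :=
  match n with
  | O => F
  | S n' => dmulti n' b (pderiv_iter n' (b n') F)
  end.

(** Classical Riemann integral on [a,b] (0 if not Riemann integrable). *)
Definition RI (f : R -> R) (a b : R) : R :=
  match excluded_middle_informative
          (exists r, exists pr : Riemann_integrable f a b, RiemannInt pr = r) with
  | left H => proj1_sig (constructive_indefinite_description _ H)
  | right _ => 0
  end.

(** Classical limit of a real sequence (0 if it does not converge). *)
Definition lim (u : nat -> R) : R :=
  match excluded_middle_informative (exists l, Un_cv u l) with
  | left H => proj1_sig (constructive_indefinite_description _ H)
  | right _ => 0
  end.

Fixpoint box_int (n m : nat) (F : (nat -> R) -> R) (x : nat -> R) : R :=
  match n with
  | O => F x
  | S n' => RI (fun t => box_int n' m F (upd x n' t)) (- INR m) (INR m)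
  end.

(** Integral over R^n of a (nonnegative, continuous) function:
    limit of the integrals over the boxes [-m,m]^n. *)
Definition Lint (n : nat) (F : (nat -> R) -> R) : R :=
  lim (fun m => box_int n m F (fun _ => 0)).

(** L^2(R^n) norm of the complex-valued function u + i v. *)
Definition L2norm (n : nat) (u v : (nat -> R) -> R) : R :=
  sqrt (Lint n (fun x => u x ^ 2 + v x ^ 2)).

(** A finite complex linear combination sum (a + i b) Phi_alpha, given as
    a list of triples ((a, b), alpha); real and imaginary parts. *)
Definition combo_re (n : nat) (l : list (R * R * (nat -> nat))) (x : nat -> R) : R :=
  fold_right (fun p acc => fst (fst p) * Phi n (snd p) x + acc) 0 l.

Definition combo_im (n : nat) (l : list (R * R * (nat -> nat))) (x : nat -> R) : R :=
  fold_right (fun p acc => snd (fst p) * Phi n (snd p) x + acc) 0 l.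

Definition in_EN (n N : nat) (l : list (R * R * (nat -> nat))) : Prop :=
  Forall (fun p => (mabs n (snd p) <= N)%nat) l.

(* The Hermite functions satisfy the ladder relations
     x phi_k = sqrt(k/2) phi_(k-1) + sqrt((k+1)/2) phi_(k+1),
     phi_k'  = sqrt(k/2) phi_(k-1) - sqrt((k+1)/2) phi_(k+1).
   Integrating (phi_a phi_b)' by parts with them shows that the phi_k are orthogonal with a
   common norm G, so the squared L2 norm of f in E_M is G^n times the l^2 norm of its
   coefficients. A derivative d/dx_j maps E_M to E_(M+1), and the weights k/2 and (k+1)/2
   show that it multiplies that l^2 norm by at most 2(M+1). Hence |beta| derivatives cost
   at most sqrt(prod_(i=1..|beta|) 2(N+i)), and writing
   2(N+i) = 2 delta^2 i^2 ((Y/i)^2 + X/i) with Y = sqrt N / delta, X = 1 / delta^2,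
   each factor is at most 4 delta^2 i^2 max(1, Y/i)^2 max(1, X/i); a product of the
   max(1, Z/i) is a term of the series of e^Z. *)

From Pilot Require Import Defs.
From Stdlib Require Import Reals List.
From Stdlib Require Import Lra Lia Bool FunctionalExtensionality.
From Coquelicot Require Import Coquelicot.
Open Scope R_scope.

Lemma deriv_eq (f : R -> R) x l : derivable_pt_lim f x l -> deriv f x = l.
Proof.
  intros Hl. unfold deriv.
  destruct (excluded_middle_informative _) as [Hex | Hnex].
  - destruct (constructive_indefinite_description _ _) as [l' Hl']; simpl.
    exact (uniqueness_limite f x l' l Hl' Hl).
  - exfalso; apply Hnex; eauto.
Qed.

(** * Hermite functions *)

Fixpoint hermite_poly (k : nat) (x : R) : R :=
  match k with
  | O => 1
  | S O => 2 * x
  | S ((S k'') as k') => 2 * x * hermite_poly k' x - 2 * INR k' * hermite_poly k'' x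
  end.

Lemma hermite_poly_S k x :
  hermite_poly (S k) x = 2 * x * hermite_poly k x - 2 * INR k * hermite_poly (pred k) x.
Proof. destruct k as [|k]; simpl; [ring | reflexivity]. Qed.

Lemma hermite_poly_derivative k x :
  derivable_pt_lim (hermite_poly k) x (2 * INR k * hermite_poly (pred k) x).
Proof.
  revert x.
  enough (Hpair : forall x,
            derivable_pt_lim (hermite_poly k) x (2 * INR k * hermite_poly (pred k) x) /\
            derivable_pt_lim (hermite_poly (S k)) x (2 * INR (S k) * hermite_poly k x))
    by (intros x; apply Hpair).
  induction k as [|k IH]; intros x; split.
  - apply is_derive_Reals; simpl. auto_derive; auto; ring.
  - apply is_derive_Reals; simpl. auto_derive; auto; ring.
  - apply IH.
  - change (hermite_poly (S (S k)))
      with (fun y => 2 * y * hermite_poly (S k) y - 2 * INR (S k) * hermite_poly k y).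
    replace (2 * INR (S (S k)) * hermite_poly (S k) x)
      with (2 * hermite_poly (S k) x + 2 * x * (2 * INR (S k) * hermite_poly k x)
            - 2 * INR (S k) * (2 * INR k * hermite_poly (pred k) x))
      by (rewrite hermite_poly_S, !S_INR; ring).
    apply derivable_pt_lim_minus.
    + apply (derivable_pt_lim_mult (fun y => 2 * y)).
      * apply is_derive_Reals. auto_derive; auto. ring.
      * apply IH.
    + apply derivable_pt_lim_scal, IH.
Qed.

Lemma nderiv_gaussian k :
  nderiv k (fun y => exp (- y ^ 2)) = fun y => (-1) ^ k * hermite_poly k y * exp (- y ^ 2).
Proof.
  induction k as [|k IH]; apply functional_extensionality; intros y.
  - simpl; ring.
  - cbn [nderiv]. rewrite IH. apply deriv_eq.
    replace ((-1) ^ S k * hermite_poly (S k) y * exp (- y ^ 2))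
      with ((-1) ^ k * (2 * INR k * hermite_poly (pred k) y) * exp (- y ^ 2)
            + (-1) ^ k * hermite_poly k y * (- (2 * y) * exp (- y ^ 2)))
      by (rewrite hermite_poly_S; simpl; ring).
    apply (derivable_pt_lim_mult (fun y => (-1) ^ k * hermite_poly k y) (fun y => exp (- y ^ 2))).
    + apply derivable_pt_lim_scal, hermite_poly_derivative.
    + apply is_derive_Reals. auto_derive; auto. simpl; ring.
Qed.

Definition hermite_norm (k : nat) : R := sqrt (2 ^ k * INR (fact k) * sqrt PI).

Lemma hermite_norm_radicand_pos k : 0 < 2 ^ k * INR (fact k) * sqrt PI.
Proof.
  repeat apply Rmult_lt_0_compat.
  - apply pow_lt; lra.
  - apply lt_0_INR, lt_O_fact.
  - apply sqrt_lt_R0, PI_RGT_0.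
Qed.

Lemma hermite_norm_pos k : 0 < hermite_norm k.
Proof. apply sqrt_lt_R0, hermite_norm_radicand_pos. Qed.

Lemma hermite_explicit k x :
  hermite k x = hermite_poly k x * exp (- x ^ 2 / 2) / hermite_norm k.
Proof.
  unfold hermite. rewrite nderiv_gaussian. fold (hermite_norm k).
  assert (Hexp : exp (x ^ 2 / 2) * exp (- x ^ 2) = exp (- x ^ 2 / 2))
    by (rewrite <- exp_plus; f_equal; field).
  assert (Hsign : (-1) ^ k * (-1) ^ k = 1)
    by (rewrite <- Rpow_mult_distr, <- (pow1 k); f_equal; ring).
  pose proof (hermite_norm_pos k).
  transitivity ((-1) ^ k * (-1) ^ k * hermite_poly k x * (exp (x ^ 2 / 2) * exp (- x ^ 2))
                / hermite_norm k); [field; lra|].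
  rewrite Hsign, Hexp, Rmult_1_l; reflexivity.
Qed.

(* Both ladder coefficients are values of [ladder]: [sqrt (k/2)] lowers [phi_k],
   [sqrt ((k+1)/2)] raises it. *)
Definition ladder (k : nat) : R := sqrt (INR k / 2).

Lemma ladder_sq k : ladder k * ladder k = INR k / 2.
Proof. apply sqrt_sqrt. pose proof (pos_INR k); lra. Qed.

Lemma ladder_0 : ladder 0 = 0.
Proof. unfold ladder; simpl. replace (0 / 2) with 0 by field. apply sqrt_0. Qed.

Lemma ladder_S_pos k : 0 < ladder (S k).
Proof. apply sqrt_lt_R0. pose proof (lt_0_INR (S k) (Nat.lt_0_succ k)); lra. Qed.

Lemma hermite_norm_S k : hermite_norm (S k) = 2 * ladder (S k) * hermite_norm k.
Proof.
  assert (Hk : 0 <= INR (S k) / 2) by (pose proof (pos_INR (S k)); lra).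
  pose proof (hermite_norm_radicand_pos k).
  unfold hermite_norm, ladder.
  replace (2 ^ S k * INR (fact (S k)) * sqrt PI)
    with (2 * 2 * (INR (S k) / 2) * (2 ^ k * INR (fact k) * sqrt PI))
    by (rewrite fact_simpl, mult_INR; simpl; field).
  rewrite sqrt_mult, (sqrt_mult (2 * 2)), sqrt_square; nra.
Qed.

Lemma hermite_raise k x :
  ladder (S k) * hermite (S k) x
  = hermite_poly (S k) x * exp (- x ^ 2 / 2) / (2 * hermite_norm k).
Proof.
  rewrite hermite_explicit, hermite_norm_S.
  pose proof (hermite_norm_pos k); pose proof (ladder_S_pos k). field; lra.
Qed.

Lemma hermite_lower k x :
  ladder k * hermite (pred k) x
  = INR k * hermite_poly (pred k) x * exp (- x ^ 2 / 2) / hermite_norm k.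
Proof.
  pose proof (hermite_norm_pos k).
  destruct k as [|k].
  - rewrite ladder_0. simpl. field; lra.
  - simpl pred. rewrite hermite_explicit, hermite_norm_S.
    replace (INR (S k)) with (2 * (ladder (S k) * ladder (S k)))
      by (rewrite ladder_sq; field).
    pose proof (hermite_norm_pos k); pose proof (ladder_S_pos k). field; lra.
Qed.

Lemma hermite_mul_x k x :
  x * hermite k x = ladder k * hermite (pred k) x + ladder (S k) * hermite (S k) x.
Proof.
  rewrite hermite_raise, hermite_lower, hermite_explicit, hermite_poly_S.
  pose proof (hermite_norm_pos k). field; lra.
Qed.

Lemma hermite_derivative k x :
  derivable_pt_lim (hermite k) x
    (ladder k * hermite (pred k) x - ladder (S k) * hermite (S k) x).
Proof.
  replace (hermite k)
    with (fun y => / hermite_norm k * (hermite_poly k y * exp (- y ^ 2 / 2))).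
  2: { apply functional_extensionality; intros y. rewrite hermite_explicit.
       pose proof (hermite_norm_pos k). field; lra. }
  replace (ladder k * hermite (pred k) x - ladder (S k) * hermite (S k) x)
    with (/ hermite_norm k * (2 * INR k * hermite_poly (pred k) x * exp (- x ^ 2 / 2)
                              + hermite_poly k x * (- x * exp (- x ^ 2 / 2)))).
  2: { pose proof (hermite_mul_x k x).
       replace (ladder k * hermite (pred k) x - ladder (S k) * hermite (S k) x)
         with (2 * (ladder k * hermite (pred k) x) - x * hermite k x) by lra.
       rewrite hermite_lower, hermite_explicit.
       pose proof (hermite_norm_pos k). field; lra. }
  apply derivable_pt_lim_scal,
    (derivable_pt_lim_mult (hermite_poly k) (fun y => exp (- y ^ 2 / 2))).
  - apply hermite_poly_derivative.
  - apply is_derive_Reals. auto_derive; auto.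
    replace (- (x * (x * 1)) * / 2) with (- x ^ 2 / 2) by field. field.
Qed.

Lemma hermite_continuous k x : continuous (hermite k) x.
Proof.
  apply continuity_pt_filterlim, derivable_continuous_pt.
  eexists; apply hermite_derivative.
Qed.

(** * Orthogonality of the Hermite functions *)

Lemma Un_cv_const c : Un_cv (fun _ => c) c.
Proof.
  intros eps Heps. exists O. intros m _.
  unfold R_dist. rewrite Rminus_eq_0, Rabs_R0. lra.
Qed.

Lemma Un_cv_scal k u l : Un_cv u l -> Un_cv (fun m => k * u m) (k * l).
Proof. intros Hu. apply CV_mult; [apply Un_cv_const | exact Hu]. Qed.

Lemma Un_cv_0_of_decay (u : nat -> R) C :
  (forall m, Rabs (u m) <= C / (1 + INR m ^ 2)) -> Un_cv u 0.
Proof.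
  intros Hu eps Heps. destruct (INR_unbounded (C / eps)) as [N HN].
  exists N. intros m Hm. unfold R_dist. rewrite Rminus_0_r.
  apply Rle_lt_trans with (1 := Hu m).
  apply le_INR in Hm. set (r := INR m) in *.
  assert (Hr : 0 <= r) by apply pos_INR.
  assert (HC : C < eps * r).
  { apply Rmult_lt_reg_r with (/ eps); [apply Rinv_0_lt_compat; lra|].
    replace (eps * r * / eps) with r by (field; lra). unfold Rdiv in HN. lra. }
  apply Rmult_lt_reg_r with (1 + r ^ 2); [nra|].
  replace (C / (1 + r ^ 2) * (1 + r ^ 2)) with C by (field; nra).
  assert (r <= 1 + r ^ 2) by nra. nra.
Qed.

Lemma pow_div_fact_le_exp z k : 0 <= z -> z ^ k / INR (fact k) <= exp z.
Proof.
  intros Hz. apply Rle_trans with (2 := exp_ge_taylor z k Hz).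
  assert (Hterm : forall i, 0 <= z ^ i / INR (fact i)).
  { intros i. apply Rdiv_le_0_compat; [apply pow_le; lra | apply lt_0_INR, lt_O_fact]. }
  destruct k as [|k]; simpl; [lra|].
  pose proof (cond_pos_sum _ k Hterm). lra.
Qed.

Lemma abs_le_1_plus_sq x : Rabs x <= 1 + x ^ 2.
Proof. apply Rabs_le. split; nra. Qed.

Lemma hermite_poly_bound k :
  exists B, 0 <= B /\ forall x, Rabs (hermite_poly k x) <= B * (1 + x ^ 2) ^ k.
Proof.
  enough (Hpair : forall k,
    (exists B, 0 <= B /\ forall x, Rabs (hermite_poly k x) <= B * (1 + x ^ 2) ^ k) /\
    (exists B, 0 <= B /\ forall x, Rabs (hermite_poly (S k) x) <= B * (1 + x ^ 2) ^ S k))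
    by apply Hpair.
  clear k. induction k as [|k [IH0 [B1 [HB1 H1]]]]; split.
  - exists 1. split; [lra|]. intros x. simpl. rewrite Rabs_R1. lra.
  - exists 2. split; [lra|]. intros x. simpl.
    rewrite Rabs_mult, Rabs_right by lra. pose proof (abs_le_1_plus_sq x). lra.
  - exists B1. auto.
  - destruct IH0 as [B0 [HB0 H0]].
    exists (2 * B1 + 2 * INR (S k) * B0). split; [pose proof (pos_INR (S k)); nra|].
    intros x. rewrite hermite_poly_S. simpl pred.
    specialize (H0 x). specialize (H1 x).
    pose proof (abs_le_1_plus_sq x) as Hx.
    set (y := 1 + x ^ 2) in *.
    assert (Hy : 1 <= y) by (unfold y; pose proof (pow2_ge_0 x); lra).
    assert (Hyk : 0 <= y ^ k) by (apply pow_le; lra).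
    pose proof (pos_INR (S k)). pose proof (Rabs_pos x).
    pose proof (Rabs_pos (hermite_poly k x)). pose proof (Rabs_pos (hermite_poly (S k) x)).
    eapply Rle_trans; [apply Rabs_triang|].
    rewrite Rabs_Ropp, !Rabs_mult, !Rabs_right by lra.
    rewrite (Rabs_right (INR (S k))) by lra.
    change (y ^ S (S k)) with (y * (y * y ^ k)). change (y ^ S k) with (y * y ^ k) in H1.
    assert (Hodd : Rabs x * Rabs (hermite_poly (S k) x) <= B1 * (y * (y * y ^ k))).
    { replace (B1 * (y * (y * y ^ k))) with (y * (B1 * (y * y ^ k))) by ring.
      apply Rmult_le_compat; auto. }
    assert (Heven : Rabs (hermite_poly k x) <= B0 * (y * (y * y ^ k))).
    { apply Rle_trans with (1 := H0). apply Rmult_le_compat_l; [lra|].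
      rewrite <- Rmult_assoc. rewrite <- (Rmult_1_l (y ^ k)) at 1.
      apply Rmult_le_compat_r; nra. }
    nra.
Qed.

Definition hermite_prod (a b : nat) (t : R) : R := hermite a t * hermite b t.

Lemma hermite_prod_continuous a b x : continuous (hermite_prod a b) x.
Proof. apply (continuous_mult (hermite a) (hermite b)); apply hermite_continuous. Qed.

Lemma ex_RInt_hermite_prod a b u v : ex_RInt (hermite_prod a b) u v.
Proof.
  apply (ex_RInt_continuous (V := R_CompleteNormedModule)).
  intros; apply hermite_prod_continuous.
Qed.

(* The Gaussian beats the polynomial: [y^(K+1) <= (K+1)! e^y] with [y = 1 + x^2]. *)
Lemma pow_mul_gaussian_le K x :
  (1 + x ^ 2) ^ K * exp (- x ^ 2) <= INR (fact (S K)) * exp 1 / (1 + x ^ 2).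
Proof.
  set (y := 1 + x ^ 2).
  assert (Hy : 1 <= y) by (unfold y; pose proof (pow2_ge_0 x); lra).
  pose proof (pow_div_fact_le_exp y (S K) ltac:(lra)) as HK.
  pose proof (lt_0_INR _ (lt_O_fact (S K))). pose proof (exp_pos (x ^ 2)).
  assert (Hey : exp y = exp 1 * exp (x ^ 2)) by apply exp_plus.
  rewrite exp_Ropp.
  apply Rmult_le_reg_r with (y * exp (x ^ 2) / INR (fact (S K))).
  { apply Rdiv_lt_0_compat; [apply Rmult_lt_0_compat|]; lra. }
  replace (y ^ K * / exp (x ^ 2) * (y * exp (x ^ 2) / INR (fact (S K))))
    with (y ^ S K / INR (fact (S K))) by (change (y ^ S K) with (y * y ^ K); field; lra).
  replace (INR (fact (S K)) * exp 1 / y * (y * exp (x ^ 2) / INR (fact (S K))))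
    with (exp y) by (rewrite Hey; field; lra).
  exact HK.
Qed.

Lemma hermite_prod_explicit a b x :
  hermite_prod a b x
  = hermite_poly a x * hermite_poly b x / (hermite_norm a * hermite_norm b) * exp (- x ^ 2).
Proof.
  unfold hermite_prod. rewrite !hermite_explicit.
  replace (exp (- x ^ 2)) with (exp (- x ^ 2 / 2) * exp (- x ^ 2 / 2))
    by (rewrite <- exp_plus; f_equal; field).
  pose proof (hermite_norm_pos a). pose proof (hermite_norm_pos b). field; lra.
Qed.

Lemma hermite_prod_decay a b :
  exists C, forall x, Rabs (hermite_prod a b x) <= C / (1 + x ^ 2).
Proof.
  destruct (hermite_poly_bound a) as [Ba [HBa Ha]].
  destruct (hermite_poly_bound b) as [Bb [HBb Hb]].
  set (D := hermite_norm a * hermite_norm b).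
  assert (HD : 0 < D) by (apply Rmult_lt_0_compat; apply hermite_norm_pos).
  exists (Ba * Bb / D * (INR (fact (S (a + b))) * exp 1)).
  intros x. rewrite hermite_prod_explicit. fold D.
  pose proof (pow_mul_gaussian_le (a + b) x) as Hgauss.
  set (y := 1 + x ^ 2) in *.
  assert (Hy : 0 < y) by (unfold y; nra).
  pose proof (exp_pos (- x ^ 2)).
  assert (Hpoly : Rabs (hermite_poly a x * hermite_poly b x) / D <= Ba * Bb / D * y ^ (a + b)).
  { unfold Rdiv. rewrite (Rmult_comm (Ba * Bb * / D)), <- !Rmult_assoc.
    apply Rmult_le_compat_r; [left; apply Rinv_0_lt_compat, HD|].
    rewrite Rabs_mult, pow_add.
    replace (y ^ a * y ^ b * Ba * Bb) with ((Ba * y ^ a) * (Bb * y ^ b)) by ring.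
    apply Rmult_le_compat; try apply Rabs_pos; auto. }
  rewrite Rabs_mult, Rabs_div, (Rabs_right D), (Rabs_right (exp _)) by lra.
  apply Rle_trans with (Ba * Bb / D * (y ^ (a + b) * exp (- x ^ 2))).
  { rewrite <- Rmult_assoc. apply Rmult_le_compat_r; lra. }
  replace (Ba * Bb / D * (INR (fact (S (a + b))) * exp 1) / y)
    with (Ba * Bb / D * (INR (fact (S (a + b))) * exp 1 / y))
    by (field; lra).
  apply Rmult_le_compat_l; [apply Rdiv_le_0_compat; [apply Rmult_le_pos|]; lra | exact Hgauss].
Qed.

Lemma hermite_prod_boundary_cv a b :
  Un_cv (fun m => hermite_prod a b (INR m) - hermite_prod a b (- INR m)) 0.
Proof.
  destruct (hermite_prod_decay a b) as [C HC].
  replace 0 with (0 - 0) by ring.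
  apply CV_minus; apply Un_cv_0_of_decay with C; intros m.
  - apply HC.
  - replace (INR m ^ 2) with ((- INR m) ^ 2) by ring. apply HC.
Qed.

Lemma hermite_prod_derivative a b x :
  derivable_pt_lim (hermite_prod a b) x
    (2 * ladder b * hermite_prod a (pred b) x - 2 * ladder (S a) * hermite_prod (S a) b x).
Proof.
  unfold hermite_prod.
  replace (2 * ladder b * (hermite a x * hermite (pred b) x)
           - 2 * ladder (S a) * (hermite (S a) x * hermite b x))
    with ((ladder a * hermite (pred a) x - ladder (S a) * hermite (S a) x) * hermite b x
          + hermite a x * (ladder b * hermite (pred b) x - ladder (S b) * hermite (S b) x)).
  - apply (derivable_pt_lim_mult (hermite a) (hermite b)); apply hermite_derivative.
  - pose proof (hermite_mul_x a x). pose proof (hermite_mul_x b x).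
    transitivity ((ladder a * hermite (pred a) x + ladder (S a) * hermite (S a) x) * hermite b x
                  - hermite a x * (ladder b * hermite (pred b) x + ladder (S b) * hermite (S b) x)
                  + 2 * ladder b * (hermite a x * hermite (pred b) x)
                  - 2 * ladder (S a) * (hermite (S a) x * hermite b x)); [ring|].
    rewrite <- H, <- H0. ring.
Qed.

Lemma RI_eq_RInt f a b : ex_RInt f a b -> RI f a b = RInt f a b.
Proof.
  intros Hf. unfold RI.
  destruct (excluded_middle_informative _) as [Hex | Hnex].
  - destruct (constructive_indefinite_description _ _) as [r [pr <-]]; simpl.
    symmetry; apply RInt_Reals.
  - exfalso; apply Hnex.
    exists (RInt f a b), (ex_RInt_Reals_0 _ _ _ Hf). symmetry; apply RInt_Reals.
Qed.

Definition hermite_inner (m a b : nat) : R := RI (hermite_prod a b) (- INR m) (INR m).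

Lemma hermite_inner_RInt m a b :
  hermite_inner m a b = RInt (hermite_prod a b) (- INR m) (INR m).
Proof. apply RI_eq_RInt, ex_RInt_hermite_prod. Qed.

Lemma hermite_inner_sym m a b : hermite_inner m a b = hermite_inner m b a.
Proof.
  unfold hermite_inner, hermite_prod.
  replace (fun t => hermite a t * hermite b t) with (fun t => hermite b t * hermite a t)
    by (apply functional_extensionality; intros; ring).
  reflexivity.
Qed.

Lemma hermite_inner_S m a b :
  hermite_inner m (S a) b
  = / (2 * ladder (S a))
    * (2 * ladder b * hermite_inner m a (pred b)
       - (hermite_prod a b (INR m) - hermite_prod a b (- INR m))).
Proof.
  rewrite !hermite_inner_RInt.
  set (dprod := fun x => 2 * ladder b * hermite_prod a (pred b) x
                         - 2 * ladder (S a) * hermite_prod (S a) b x).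
  assert (Hftc : is_RInt dprod (- INR m) (INR m)
                   (minus (hermite_prod a b (INR m)) (hermite_prod a b (- INR m)))).
  { apply (is_RInt_derive (V := R_CompleteNormedModule)).
    - intros; apply is_derive_Reals, hermite_prod_derivative.
    - intros x _. apply (continuous_minus (V := R_NormedModule));
        apply (continuous_scal_r (V := R_NormedModule)), hermite_prod_continuous. }
  assert (Hlin : is_RInt dprod (- INR m) (INR m)
                   (2 * ladder b * RInt (hermite_prod a (pred b)) (- INR m) (INR m)
                    - 2 * ladder (S a) * RInt (hermite_prod (S a) b) (- INR m) (INR m))).
  { apply (is_RInt_minus (V := R_NormedModule)); apply (is_RInt_scal (V := R_NormedModule));
      apply (RInt_correct (V := R_CompleteNormedModule)), ex_RInt_hermite_prod. }
  pose proof (is_RInt_unique _ _ _ _ Hftc) as E.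
  rewrite (is_RInt_unique _ _ _ _ Hlin) in E.
  unfold minus, plus, opp in E; simpl in E.
  pose proof (ladder_S_pos a).
  apply Rmult_eq_reg_l with (2 * ladder (S a)); [|lra].
  rewrite <- Rmult_assoc, Rinv_r, Rmult_1_l by lra. lra.
Qed.

Lemma hermite_inner_S_0_cv a : Un_cv (fun m => hermite_inner m (S a) 0) 0.
Proof.
  apply Un_cv_ext with
    (fun m => / (2 * ladder (S a))
              * (0 - (hermite_prod a 0 (INR m) - hermite_prod a 0 (- INR m)))).
  { intros m. rewrite hermite_inner_S, ladder_0. f_equal. ring. }
  assert (Hcv := Un_cv_scal (/ (2 * ladder (S a))) _ _
    (CV_minus _ _ _ _ (Un_cv_const 0) (hermite_prod_boundary_cv a 0))).
  rewrite Rminus_0_r, Rmult_0_r in Hcv. exact Hcv.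
Qed.

Lemma hermite_inner_S_S_cv a b L :
  Un_cv (fun m => hermite_inner m a b) L ->
  Un_cv (fun m => hermite_inner m (S a) (S b)) (ladder (S b) / ladder (S a) * L).
Proof.
  intros HL. pose proof (ladder_S_pos a).
  apply Un_cv_ext with (fun m => / (2 * ladder (S a)) * (2 * ladder (S b) * hermite_inner m a b
    - (hermite_prod a (S b) (INR m) - hermite_prod a (S b) (- INR m)))).
  { intros m. rewrite hermite_inner_S. reflexivity. }
  replace (ladder (S b) / ladder (S a) * L)
    with (/ (2 * ladder (S a)) * (2 * ladder (S b) * L - 0)) by (field; lra).
  apply Un_cv_scal, CV_minus; [apply Un_cv_scal, HL | apply hermite_prod_boundary_cv].
Qed.

(* The common value [G = |phi_0|^2] (in fact 1) never needs to be computed. *)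
Lemma hermite_inner_cv G :
  Un_cv (fun m => hermite_inner m 0 0) G ->
  forall a b, Un_cv (fun m => hermite_inner m a b) (if Nat.eqb a b then G else 0).
Proof.
  intros HG a. induction a as [|a IH]; intros [|b]; simpl.
  - exact HG.
  - apply Un_cv_ext with (fun m => hermite_inner m (S b) 0).
    + intros; apply hermite_inner_sym.
    + apply hermite_inner_S_0_cv.
  - apply hermite_inner_S_0_cv.
  - replace (if Nat.eqb a b then G else 0)
      with (ladder (S b) / ladder (S a) * (if Nat.eqb a b then G else 0)).
    + apply hermite_inner_S_S_cv, IH.
    + pose proof (ladder_S_pos a).
      destruct (Nat.eqb_spec a b) as [<- | _]; field; lra.
Qed.

Lemma continuous_inv_1_plus_sq x : continuous (fun t => / (1 + t ^ 2)) x.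
Proof. apply (ex_derive_continuous (V := R_NormedModule)). auto_derive. nra. Qed.

Lemma RInt_inv_1_plus_sq u v : RInt (fun t => / (1 + t ^ 2)) u v = atan v - atan u.
Proof.
  apply is_RInt_unique, (is_RInt_derive (V := R_CompleteNormedModule) atan).
  - intros; apply is_derive_Reals, derivable_pt_lim_atan.
  - intros; apply continuous_inv_1_plus_sq.
Qed.

Lemma hermite_prod_0_0_nonneg x : 0 <= hermite_prod 0 0 x.
Proof. apply Rle_0_sqr. Qed.

Lemma hermite_inner_0_0_growing : Un_growing (fun m => hermite_inner m 0 0).
Proof.
  intros m. rewrite !hermite_inner_RInt, S_INR.
  pose proof (pos_INR m).
  rewrite <- (RInt_Chasles (V := R_CompleteNormedModule) _ (- (INR m + 1)) (- INR m))
    by apply ex_RInt_hermite_prod.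
  rewrite <- (RInt_Chasles (V := R_CompleteNormedModule) _ (- INR m) (INR m) (INR m + 1))
    by apply ex_RInt_hermite_prod.
  assert (0 <= RInt (hermite_prod 0 0) (- (INR m + 1)) (- INR m))
    by (apply RInt_ge_0; auto using ex_RInt_hermite_prod, hermite_prod_0_0_nonneg; lra).
  assert (0 <= RInt (hermite_prod 0 0) (INR m) (INR m + 1))
    by (apply RInt_ge_0; auto using ex_RInt_hermite_prod, hermite_prod_0_0_nonneg; lra).
  unfold plus; simpl. lra.
Qed.

Lemma hermite_inner_0_0_bounded : has_ub (fun m => hermite_inner m 0 0).
Proof.
  destruct (hermite_prod_decay 0 0) as [C HC].
  assert (HC0 : 0 <= C).
  { specialize (HC 0). rewrite pow_i, Rplus_0_r, Rdiv_1_r in HC by lia.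
    pose proof (Rabs_pos (hermite_prod 0 0 0)). lra. }
  exists (C * PI). intros y [m ->]. rewrite hermite_inner_RInt.
  pose proof (pos_INR m).
  assert (Hint : ex_RInt (fun t => / (1 + t ^ 2)) (- INR m) (INR m))
    by (apply (ex_RInt_continuous (V := R_CompleteNormedModule));
        intros; apply continuous_inv_1_plus_sq).
  apply Rle_trans with (RInt (fun t => C * / (1 + t ^ 2)) (- INR m) (INR m)).
  - apply RInt_le; [lra | apply ex_RInt_hermite_prod | |].
    + apply (ex_RInt_scal (V := R_NormedModule)) with (f := fun t => / (1 + t ^ 2)), Hint.
    + intros x _. apply Rle_trans with (1 := Rle_abs _), HC.
  - rewrite (RInt_scal (V := R_CompleteNormedModule) (fun t => / (1 + t ^ 2))) by exact Hint.
    unfold scal; simpl; unfold mult; simpl. rewrite RInt_inv_1_plus_sq.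
    pose proof (atan_bound (INR m)). pose proof (atan_bound (- INR m)).
    apply Rmult_le_compat_l; lra.
Qed.

Lemma hermite_inner_0_0_cv : exists G, 0 <= G /\ Un_cv (fun m => hermite_inner m 0 0) G.
Proof.
  destruct (growing_cv _ hermite_inner_0_0_growing hermite_inner_0_0_bounded) as [G HG].
  exists G. split; [|exact HG].
  apply Rle_cv_lim with (fun _ => 0) (fun m => hermite_inner m 0 0); auto using Un_cv_const.
  intros m. rewrite hermite_inner_RInt. pose proof (pos_INR m).
  apply RInt_ge_0; auto using ex_RInt_hermite_prod, hermite_prod_0_0_nonneg; lra.
Qed.

(** * Norms of finite Hermite expansions *)

Definition lsum {A : Type} (f : A -> R) (l : list A) : R :=
  fold_right (fun p acc => f p + acc) 0 l.

Lemma lsum_ext {A : Type} (f g : A -> R) l : (forall p, In p l -> f p = g p) -> lsum f l = lsum g l.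
Proof. induction l as [|p l IH]; simpl; intros H; auto. rewrite H, IH; auto. Qed.

Lemma lsum_app {A : Type} (f : A -> R) l1 l2 : lsum f (l1 ++ l2) = lsum f l1 + lsum f l2.
Proof. induction l1 as [|p l1 IH]; simpl; [ring|]. rewrite IH; ring. Qed.

Lemma lsum_map {A B : Type} (f : B -> R) (g : A -> B) l :
  lsum f (map g l) = lsum (fun p => f (g p)) l.
Proof. induction l as [|p l IH]; simpl; auto. rewrite IH; auto. Qed.

Lemma lsum_plus {A : Type} (f g : A -> R) l : lsum (fun p => f p + g p) l = lsum f l + lsum g l.
Proof. induction l as [|p l IH]; simpl; [ring|]. rewrite IH; ring. Qed.

Lemma lsum_scal {A : Type} (f : A -> R) k l : lsum (fun p => k * f p) l = k * lsum f l.
Proof. induction l as [|p l IH]; simpl; [ring|]. rewrite IH; ring. Qed.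

Lemma lsum_0 {A : Type} (l : list A) : lsum (fun _ => 0) l = 0.
Proof. induction l as [|p l IH]; simpl; auto. rewrite IH; ring. Qed.

Lemma lsum_mult {A B : Type} (f : A -> R) (g : B -> R) l1 l2 :
  lsum f l1 * lsum g l2 = lsum (fun p => lsum (fun q => f p * g q) l2) l1.
Proof. induction l1 as [|p l1 IH]; simpl; [ring|]. rewrite <- IH, (lsum_scal g). ring. Qed.

Lemma lsum_swap {A B : Type} (f : A -> B -> R) l1 l2 :
  lsum (fun p => lsum (fun q => f p q) l2) l1 = lsum (fun q => lsum (fun p => f p q) l1) l2.
Proof.
  induction l1 as [|p l1 IH]; simpl; [symmetry; apply lsum_0|].
  rewrite IH, <- lsum_plus. reflexivity.
Qed.

Lemma lsum_nonneg {A : Type} (f : A -> R) l : (forall p, In p l -> 0 <= f p) -> 0 <= lsum f l.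
Proof.
  induction l as [|p l IH]; simpl; intros H; [lra|].
  apply Rplus_le_le_0_compat; auto.
Qed.

Lemma lsum_ge_member {A : Type} (f : A -> R) l p :
  (forall q, In q l -> 0 <= f q) -> In p l -> f p <= lsum f l.
Proof.
  induction l as [|q l IH]; simpl; intros H Hp; [contradiction|].
  destruct Hp as [<- | Hp].
  - pose proof (lsum_nonneg f l (fun q Hq => H q (or_intror Hq))). lra.
  - pose proof (H q (or_introl eq_refl)). pose proof (IH (fun q Hq => H q (or_intror Hq)) Hp). lra.
Qed.

Lemma lsum_cv {A : Type} (u : A -> nat -> R) (L : A -> R) l :
  (forall p, In p l -> Un_cv (u p) (L p)) -> Un_cv (fun m => lsum (fun p => u p m) l) (lsum L l).
Proof.
  induction l as [|p l IH]; simpl; intros H; [apply Un_cv_const|].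
  apply CV_plus; auto.
Qed.

Lemma is_RInt_lsum {A : Type} (f : A -> R -> R) (I : A -> R) l u v :
  (forall p, In p l -> is_RInt (f p) u v (I p)) ->
  is_RInt (fun t => lsum (fun p => f p t) l) u v (lsum I l).
Proof.
  induction l as [|p l IH]; simpl; intros H.
  - pose proof (is_RInt_const (V := R_NormedModule) u v 0) as H0.
    replace (scal (v - u) (0 : R_NormedModule)) with 0 in H0
      by (unfold scal; simpl; unfold mult; simpl; ring).
    exact H0.
  - apply (is_RInt_plus (V := R_NormedModule)); auto.
Qed.

Lemma upd_same x j t : upd x j t j = t.
Proof. unfold upd. rewrite Nat.eqb_refl. reflexivity. Qed.

Lemma upd_other x j t i : i <> j -> upd x j t i = x i.
Proof. intros Hij. unfold upd. destruct (Nat.eqb_spec i j); [contradiction | reflexivity]. Qed.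

Fixpoint box_inner (n m : nat) (a b : nat -> nat) : R :=
  match n with
  | O => 1
  | S n' => box_inner n' m a b * hermite_inner m (a n') (b n')
  end.

(* The weights [w] may depend on the coordinates [>= n], which are frozen while
   integrating over the first [n] ones. *)
Lemma box_int_hermite_pairs {A : Type} n m (l : list A) (a : A -> nat -> nat) :
  forall (w : A -> A -> (nat -> R) -> R) x,
  (forall p q y j t, (j < n)%nat -> w p q (upd y j t) = w p q y) ->
  box_int n m
    (fun y => lsum (fun p => lsum (fun q => w p q y * (Phi n (a p) y * Phi n (a q) y)) l) l) x
  = lsum (fun p => lsum (fun q => w p q x * box_inner n m (a p) (a q)) l) l.
Proof.
  induction n as [|n IH]; intros w x Hw.
  - simpl. apply lsum_ext; intros; apply lsum_ext; intros; ring.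
  - cbn [box_int].
    set (w' := fun p q (y : nat -> R) =>
                 w p q y * (hermite (a p n) (y n) * hermite (a q n) (y n))).
    set (c := fun p q => w p q x * box_inner n m (a p) (a q)).
    transitivity (RI (fun t => lsum (fun p => lsum (fun q =>
                    c p q * hermite_prod (a p n) (a q n) t) l) l) (- INR m) (INR m)).
    + f_equal. apply functional_extensionality; intros t.
      replace (fun y => lsum (fun p => lsum (fun q =>
                 w p q y * (Phi (S n) (a p) y * Phi (S n) (a q) y)) l) l)
        with (fun y => lsum (fun p => lsum (fun q =>
                 w' p q y * (Phi n (a p) y * Phi n (a q) y)) l) l).
      2: { apply functional_extensionality; intros y.
           apply lsum_ext; intros; apply lsum_ext; intros. unfold w'. simpl. ring. }
      rewrite IH.
      * apply lsum_ext; intros p _; apply lsum_ext; intros q _.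
        unfold w', c, hermite_prod. rewrite upd_same, Hw by lia. ring.
      * intros p q y j s Hj. unfold w'. rewrite Hw, upd_other by lia. reflexivity.
    + assert (Hint : is_RInt (fun t => lsum (fun p => lsum (fun q =>
                       c p q * hermite_prod (a p n) (a q n) t) l) l) (- INR m) (INR m)
                       (lsum (fun p => lsum (fun q =>
                          c p q * hermite_inner m (a p n) (a q n)) l) l)).
      { apply is_RInt_lsum; intros p _; apply is_RInt_lsum; intros q _.
        rewrite hermite_inner_RInt.
        apply (is_RInt_scal (V := R_NormedModule)), (RInt_correct (V := R_CompleteNormedModule)).
        apply ex_RInt_hermite_prod. }
      rewrite (RI_eq_RInt _ _ _ (ex_intro _ _ Hint)), (is_RInt_unique _ _ _ _ Hint).
      apply lsum_ext; intros p _; apply lsum_ext; intros q _.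
      unfold c. simpl. ring.
Qed.

Fixpoint eq_upto (n : nat) (a b : nat -> nat) : bool :=
  match n with
  | O => true
  | S n' => eq_upto n' a b && Nat.eqb (a n') (b n')
  end.

Definition indic (b : bool) : R := if b then 1 else 0.

Lemma box_inner_cv G n a b :
  Un_cv (fun m => hermite_inner m 0 0) G ->
  Un_cv (fun m => box_inner n m a b) (indic (eq_upto n a b) * G ^ n).
Proof.
  intros HG. induction n as [|n IH]; simpl.
  - rewrite Rmult_1_l. apply Un_cv_const.
  - replace (indic (eq_upto n a b && Nat.eqb (a n) (b n)) * (G * G ^ n))
      with (indic (eq_upto n a b) * G ^ n * (if Nat.eqb (a n) (b n) then G else 0))
      by (unfold indic; destruct (eq_upto n a b), (Nat.eqb (a n) (b n)); simpl; ring).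
    apply CV_mult; [exact IH | apply hermite_inner_cv, HG].
Qed.

Lemma lim_eq u l : Un_cv u l -> Defs.lim u = l.
Proof.
  intros Hu. unfold Defs.lim.
  destruct (excluded_middle_informative _) as [Hex | Hnex].
  - destruct (constructive_indefinite_description _ _) as [l' Hl']; simpl.
    exact (UL_sequence u l' l Hl' Hu).
  - exfalso; apply Hnex; eauto.
Qed.

Definition coef_dot (p q : R * R * (nat -> nat)) : R :=
  fst (fst p) * fst (fst q) + snd (fst p) * snd (fst q).

(* [coef_sqnorm n l] is [sum_alpha |sum_(p in l, alpha_p = alpha) c_p|^2], the squared l^2
   norm of the coefficients once repeated multi-indices are merged; [coef_form] weights the
   class of [alpha] by [w alpha]. *)
Definition coef_form (n : nat) (w : (nat -> nat) -> R) (l : list (R * R * (nat -> nat)))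
  : R :=
  lsum (fun p => lsum (fun q =>
    coef_dot p q * w (snd p) * indic (eq_upto n (snd p) (snd q))) l) l.

Definition coef_sqnorm (n : nat) (l : list (R * R * (nat -> nat))) : R :=
  coef_form n (fun _ => 1) l.

Lemma combo_sq_expand n l x :
  combo_re n l x ^ 2 + combo_im n l x ^ 2
  = lsum (fun p => lsum (fun q => coef_dot p q * (Phi n (snd p) x * Phi n (snd q) x)) l) l.
Proof.
  change (combo_re n l x) with (lsum (fun p => fst (fst p) * Phi n (snd p) x) l).
  change (combo_im n l x) with (lsum (fun p => snd (fst p) * Phi n (snd p) x) l).
  rewrite <- !Rsqr_pow2; unfold Rsqr. rewrite !lsum_mult, <- lsum_plus.
  apply lsum_ext; intros p _. rewrite <- lsum_plus.
  apply lsum_ext; intros q _. unfold coef_dot. ring.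
Qed.

Lemma L2norm_combo : exists G, 0 <= G /\ forall n l,
  L2norm n (combo_re n l) (combo_im n l) = sqrt (G ^ n * coef_sqnorm n l).
Proof.
  destruct hermite_inner_0_0_cv as [G [HG0 HG]].
  exists G. split; [exact HG0|]. intros n l.
  unfold L2norm, Lint. f_equal. apply lim_eq.
  apply Un_cv_ext with
    (fun m => lsum (fun p => lsum (fun q => coef_dot p q * box_inner n m (snd p) (snd q)) l) l).
  { intros m. rewrite <- (box_int_hermite_pairs n m l snd (fun p q _ => coef_dot p q) (fun _ => 0))
      by auto.
    f_equal. apply functional_extensionality; intros y. symmetry; apply combo_sq_expand. }
  replace (G ^ n * coef_sqnorm n l)
    with (lsum (fun p => lsum (fun q =>
            coef_dot p q * (indic (eq_upto n (snd p) (snd q)) * G ^ n)) l) l).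
  2: { unfold coef_sqnorm, coef_form. rewrite <- lsum_scal.
       apply lsum_ext; intros p _. rewrite <- lsum_scal.
       apply lsum_ext; intros q _. ring. }
  apply (lsum_cv (fun p m => lsum (fun q => coef_dot p q * box_inner n m (snd p) (snd q)) l)).
  intros p _.
  apply (lsum_cv (fun q m => coef_dot p q * box_inner n m (snd p) (snd q))).
  intros q _. apply Un_cv_scal, box_inner_cv, HG.
Qed.

(** * Derivatives of finite Hermite expansions *)

Definition upd_mi (a : nat -> nat) (j v : nat) : nat -> nat :=
  fun i => if Nat.eqb i j then v else a i.

Lemma upd_mi_same a j v : upd_mi a j v j = v.
Proof. unfold upd_mi. rewrite Nat.eqb_refl. reflexivity. Qed.

Lemma upd_mi_other a j v i : i <> j -> upd_mi a j v i = a i.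
Proof. intros Hij. unfold upd_mi. destruct (Nat.eqb_spec i j); [contradiction | reflexivity]. Qed.

Lemma upd_mi_id a j : upd_mi a j (a j) = a.
Proof.
  apply functional_extensionality; intros i. unfold upd_mi.
  destruct (Nat.eqb_spec i j); subst; reflexivity.
Qed.

Lemma upd_id y j : upd y j (y j) = y.
Proof.
  apply functional_extensionality; intros i. unfold upd.
  destruct (Nat.eqb_spec i j); subst; reflexivity.
Qed.

Fixpoint Phi_except (n : nat) (a : nat -> nat) (y : nat -> R) (j : nat) : R :=
  match n with
  | O => 1
  | S n' => Phi_except n' a y j * (if Nat.eqb n' j then 1 else hermite (a n') (y n'))
  end.

Lemma Phi_upd_split n a y j v t : (j < n)%nat ->
  Phi n (upd_mi a j v) (upd y j t) = Phi_except n a y j * hermite v t.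
Proof.
  induction n as [|n IH]; intros Hj; [lia|]. simpl.
  destruct (Nat.eqb_spec n j) as [-> | Hnj].
  - rewrite upd_mi_same, upd_same.
    assert (Hfirst : forall k, (k <= j)%nat ->
              Phi_except k a y j = Phi k (upd_mi a j v) (upd y j t)).
    { induction k as [|k IHk]; simpl; intros Hk; [reflexivity|].
      destruct (Nat.eqb_spec k j); [lia|].
      rewrite IHk, upd_mi_other, upd_other by lia. reflexivity. }
    rewrite Hfirst by lia. ring.
  - rewrite IH, upd_mi_other, upd_other by lia. ring.
Qed.

Lemma derivable_pt_lim_lsum {A : Type} (f : A -> R -> R) (df : A -> R) l x :
  (forall p, In p l -> derivable_pt_lim (f p) x (df p)) ->
  derivable_pt_lim (fun t => lsum (fun p => f p t) l) x (lsum df l).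
Proof.
  induction l as [|p l IH]; simpl; intros H.
  - apply derivable_pt_lim_const.
  - apply (derivable_pt_lim_plus (f p)); auto.
Qed.

Definition combo_with (c : R * R -> R) (n : nat) (l : list (R * R * (nat -> nat)))
  (x : nat -> R) : R :=
  lsum (fun p => c (fst p) * Phi n (snd p) x) l.

Definition homogeneous (c : R * R -> R) : Prop := forall k a b, c (k * a, k * b) = k * c (a, b).

Definition lower_term (j : nat) (p : R * R * (nat -> nat)) : R * R * (nat -> nat) :=
  let k := ladder (snd p j) in
  (k * fst (fst p), k * snd (fst p), upd_mi (snd p) j (pred (snd p j))).

Definition raise_term (j : nat) (p : R * R * (nat -> nat)) : R * R * (nat -> nat) :=
  let k := - ladder (S (snd p j)) in
  (k * fst (fst p), k * snd (fst p), upd_mi (snd p) j (S (snd p j))).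

Definition pderiv_list (j : nat) (l : list (R * R * (nat -> nat))) : list (R * R * (nat -> nat)) :=
  map (lower_term j) l ++ map (raise_term j) l.

Lemma pderiv_combo c n j l : homogeneous c -> (j < n)%nat ->
  pderiv j (combo_with c n l) = combo_with c n (pderiv_list j l).
Proof.
  intros Hc Hj. apply functional_extensionality; intros x. unfold pderiv.
  apply deriv_eq.
  replace (fun t => combo_with c n l (upd x j t))
    with (fun t => lsum (fun p => c (fst p) * Phi_except n (snd p) x j * hermite (snd p j) t) l).
  2: { apply functional_extensionality; intros t. apply lsum_ext; intros p _.
       rewrite <- (upd_mi_id (snd p) j) at 2. rewrite Phi_upd_split by exact Hj. ring. }
  replace (combo_with c n (pderiv_list j l) x)
    with (lsum (fun p => c (fst p) * Phi_except n (snd p) x j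
             * (ladder (snd p j) * hermite (pred (snd p j)) (x j)
                - ladder (S (snd p j)) * hermite (S (snd p j)) (x j))) l).
  - apply derivable_pt_lim_lsum; intros p _.
    apply derivable_pt_lim_scal, hermite_derivative.
  - unfold combo_with, pderiv_list. rewrite lsum_app, !lsum_map, <- lsum_plus.
    apply lsum_ext; intros [[re im] a] _. unfold lower_term, raise_term; simpl.
    rewrite !Hc, <- (upd_id x j), !Phi_upd_split, upd_id by exact Hj. ring.
Qed.

Fixpoint dmulti_list (k : nat) (b : nat -> nat) (l : list (R * R * (nat -> nat)))
  : list (R * R * (nat -> nat)) :=
  match k with
  | O => l
  | S k' => dmulti_list k' b (Nat.iter (b k') (pderiv_list k') l)
  end.

Lemma dmulti_combo c n k b l : homogeneous c -> (k <= n)%nat ->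
  dmulti k b (combo_with c n l) = combo_with c n (dmulti_list k b l).
Proof.
  intros Hc. revert l. induction k as [|k IH]; intros l Hk; simpl; [reflexivity|].
  replace (pderiv_iter k (b k) (combo_with c n l))
    with (combo_with c n (Nat.iter (b k) (pderiv_list k) l)).
  - apply IH. lia.
  - induction (b k) as [|i IHi]; simpl; [reflexivity|].
    rewrite <- IHi. symmetry; apply pderiv_combo; [exact Hc | lia].
Qed.

(** * The coefficient form *)

Section ClassSums.
Variables (A : Type) (e : A -> A -> bool).
Hypothesis e_refl : forall p, e p p = true.
Hypothesis e_sym : forall p q, e p q = e q p.
Hypothesis e_trans : forall p q r, e p q = true -> e q r = true -> e p r = true.

(* On an [e]-class [C] the double sum is [w_C * (sum_{p in C} v p)^2]; weighting every
   [p] by [1 / |class of p|] avoids enumerating the classes. *)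
Lemma class_form_nonneg (l : list A) (v w : A -> R) :
  (forall p, In p l -> 0 <= w p) ->
  (forall p q, In p l -> In q l -> e p q = true -> w p = w q) ->
  0 <= lsum (fun p => lsum (fun q => v p * v q * w p * indic (e p q)) l) l.
Proof.
  intros Hw Hwe.
  set (S p := lsum (fun q => indic (e p q) * v q) l).
  set (N p := lsum (fun q => indic (e p q)) l).
  assert (Hclass : forall p q, e p q = true -> S p = S q /\ N p = N q).
  { intros p q Hpq.
    assert (He : forall r, e p r = e q r).
    { intros r. destruct (e q r) eqn:Hqr; [exact (e_trans _ _ _ Hpq Hqr)|].
      destruct (e p r) eqn:Hpr; [|reflexivity].
      rewrite e_sym in Hpq. rewrite (e_trans _ _ _ Hpq Hpr) in Hqr. discriminate. }
    unfold S, N. split; apply lsum_ext; intros r _; rewrite He; reflexivity. }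
  assert (HN : forall p, In p l -> 0 < N p).
  { intros p Hp. apply Rlt_le_trans with (indic (e p p)); [rewrite e_refl; simpl; lra|].
    apply (lsum_ge_member (fun q => indic (e p q))); [|exact Hp].
    intros q _. unfold indic. destruct (e p q); lra. }
  replace (lsum (fun p => lsum (fun q => v p * v q * w p * indic (e p q)) l) l)
    with (lsum (fun p => w p / N p * S p ^ 2) l).
  { apply lsum_nonneg; intros p Hp. pose proof (HN p Hp). pose proof (Hw p Hp).
    apply Rmult_le_pos; [apply Rdiv_le_0_compat; lra | apply pow2_ge_0]. }
  transitivity (lsum (fun p => lsum (fun q => indic (e p q) * v q * (w p / N p * S p)) l) l).
  { apply lsum_ext; intros p _. transitivity ((w p / N p * S p) * S p); [ring|].
    unfold S at 2. rewrite <- lsum_scal. apply lsum_ext; intros; ring. }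
  rewrite lsum_swap. apply lsum_ext; intros q Hq.
  transitivity (lsum (fun p => indic (e q p) * (v q * (w q / N q * S q))) l).
  { apply lsum_ext; intros p Hp. rewrite e_sym.
    destruct (e q p) eqn:Hqp; [|unfold indic; ring].
    destruct (Hclass q p Hqp) as [HS HN'].
    rewrite (Hwe q p Hq Hp Hqp), HS, HN'. ring. }
  transitivity (v q * (w q / N q * S q) * N q).
  { rewrite Rmult_comm. unfold N. rewrite <- lsum_scal. apply lsum_ext; intros; ring. }
  pose proof (HN q Hq).
  transitivity (v q * w q * S q); [field; lra|].
  unfold S. rewrite <- lsum_scal. apply lsum_ext; intros; ring.
Qed.

End ClassSums.

Lemma eq_upto_spec n a b : eq_upto n a b = true <-> forall i, (i < n)%nat -> a i = b i.
Proof.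
  induction n as [|n IH]; simpl.
  - split; intros; [lia | reflexivity].
  - rewrite andb_true_iff, IH, Nat.eqb_eq. split.
    + intros [Hlt Hn] i Hi. destruct (Nat.eq_dec i n) as [-> | Hne]; auto with arith.
      apply Hlt. lia.
    + intros H. split; auto with arith.
Qed.

Lemma eq_upto_refl n a : eq_upto n a a = true.
Proof. apply eq_upto_spec. reflexivity. Qed.

Lemma eq_upto_sym n a b : eq_upto n a b = eq_upto n b a.
Proof. apply eq_iff_eq_true. rewrite !eq_upto_spec. split; intros H i Hi; symmetry; auto. Qed.

Lemma eq_upto_trans n a b c : eq_upto n a b = true -> eq_upto n b c = true -> eq_upto n a c = true.
Proof. rewrite !eq_upto_spec. intros Hab Hbc i Hi. rewrite Hab, Hbc; auto. Qed.

Lemma eq_upto_upd_mi n j a b u v : (j < n)%nat ->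
  eq_upto n (upd_mi a j u) (upd_mi b j v)
  = Nat.eqb u v && eq_upto n (upd_mi a j 0) (upd_mi b j 0).
Proof.
  intros Hj. apply eq_iff_eq_true. rewrite andb_true_iff, Nat.eqb_eq, !eq_upto_spec.
  unfold upd_mi. split.
  - intros H. split.
    + specialize (H j Hj). rewrite Nat.eqb_refl in H. exact H.
    + intros i Hi. specialize (H i Hi). destruct (Nat.eqb i j); auto.
  - intros [-> H] i Hi. specialize (H i Hi). destruct (Nat.eqb i j); auto.
Qed.

Lemma eq_upto_split n j a b : (j < n)%nat ->
  eq_upto n a b = Nat.eqb (a j) (b j) && eq_upto n (upd_mi a j 0) (upd_mi b j 0).
Proof.
  intros Hj. rewrite <- eq_upto_upd_mi by exact Hj. rewrite !upd_mi_id. reflexivity.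
Qed.

Lemma indic_andb b c : indic (b && c) = indic b * indic c.
Proof. destruct b, c; unfold indic; simpl; ring. Qed.

Lemma coef_form_nonneg n w l :
  (forall p, In p l -> 0 <= w (snd p)) ->
  (forall p q, In p l -> In q l -> eq_upto n (snd p) (snd q) = true -> w (snd p) = w (snd q)) ->
  0 <= coef_form n w l.
Proof.
  intros Hw Hwe. set (e := fun p q : R * R * (nat -> nat) => eq_upto n (snd p) (snd q)).
  assert (He_refl : forall p, e p p = true) by (intros; apply eq_upto_refl).
  assert (He_sym : forall p q, e p q = e q p) by (intros; apply eq_upto_sym).
  assert (He_trans : forall p q r, e p q = true -> e q r = true -> e p r = true)
    by (intros ? ? ?; apply eq_upto_trans).
  replace (coef_form n w l)
    with (lsum (fun p => lsum (fun q =>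
            fst (fst p) * fst (fst q) * w (snd p) * indic (e p q)) l) l
          + lsum (fun p => lsum (fun q =>
            snd (fst p) * snd (fst q) * w (snd p) * indic (e p q)) l) l).
  - apply Rplus_le_le_0_compat;
      apply (class_form_nonneg _ e He_refl He_sym He_trans l _ (fun p => w (snd p))); auto.
  - unfold coef_form. rewrite <- lsum_plus. apply lsum_ext; intros p _.
    rewrite <- lsum_plus. apply lsum_ext; intros q _. unfold coef_dot, e. ring.
Qed.

Lemma coef_sqnorm_nonneg n l : 0 <= coef_sqnorm n l.
Proof. apply coef_form_nonneg; intros; [lra | reflexivity]. Qed.

Lemma coef_form_lin n w1 w2 k1 k2 l :
  coef_form n (fun a => k1 * w1 a + k2 * w2 a) l = k1 * coef_form n w1 l + k2 * coef_form n w2 l.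
Proof.
  unfold coef_form. rewrite <- !lsum_scal, <- lsum_plus. apply lsum_ext; intros p _.
  rewrite <- !lsum_scal, <- lsum_plus. apply lsum_ext; intros q _. ring.
Qed.

Lemma coef_form_mono n w1 w2 l :
  (forall p, In p l -> w1 (snd p) <= w2 (snd p)) ->
  (forall p q, In p l -> In q l -> eq_upto n (snd p) (snd q) = true ->
     w1 (snd p) = w1 (snd q) /\ w2 (snd p) = w2 (snd q)) ->
  coef_form n w1 l <= coef_form n w2 l.
Proof.
  intros Hle Hwe.
  assert (H : 0 <= coef_form n (fun a => 1 * w2 a + (-1) * w1 a) l).
  { apply coef_form_nonneg.
    - intros p Hp. specialize (Hle p Hp). lra.
    - intros p q Hp Hq Hpq. destruct (Hwe p q Hp Hq Hpq) as [-> ->]. reflexivity. }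
  rewrite coef_form_lin in H. lra.
Qed.

Lemma lsum_opp {A : Type} (f : A -> R) l : lsum (fun p => - f p) l = - lsum f l.
Proof. induction l as [|p l IH]; simpl; [ring|]. rewrite IH; ring. Qed.

Lemma lsum_pairs_parallelogram {A : Type} (f : A -> A -> R) (g : A -> A) X Y :
  (forall p q, f (g p) q = - f p q) -> (forall p q, f p (g q) = - f p q) ->
  lsum (fun p => lsum (f p) (X ++ Y)) (X ++ Y)
  + lsum (fun p => lsum (f p) (X ++ map g Y)) (X ++ map g Y)
  = 2 * lsum (fun p => lsum (f p) X) X + 2 * lsum (fun p => lsum (f p) Y) Y.
Proof.
  intros Hl Hr.
  assert (Hpairs : forall Z, lsum (fun p => lsum (f p) (X ++ Z)) (X ++ Z)
    = lsum (fun p => lsum (f p) X) X + lsum (fun p => lsum (f p) Z) X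
      + lsum (fun p => lsum (f p) X) Z + lsum (fun p => lsum (f p) Z) Z).
  { intros Z. rewrite lsum_app.
    rewrite !(lsum_ext (fun p => lsum (f p) (X ++ Z)) (fun p => lsum (f p) X + lsum (f p) Z))
      by (intros; apply lsum_app).
    rewrite !lsum_plus. ring. }
  rewrite !Hpairs, !lsum_map.
  assert (E1 : lsum (fun p => lsum (f p) (map g Y)) X = - lsum (fun p => lsum (f p) Y) X).
  { rewrite <- lsum_opp. apply lsum_ext; intros p _.
    rewrite lsum_map, <- lsum_opp. apply lsum_ext; intros; apply Hr. }
  assert (E2 : lsum (fun p => lsum (f (g p)) X) Y = - lsum (fun p => lsum (f p) X) Y).
  { rewrite <- lsum_opp. apply lsum_ext; intros p _.
    rewrite <- lsum_opp. apply lsum_ext; intros; apply Hl. }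
  assert (E3 : lsum (fun p => lsum (f (g p)) (map g Y)) Y = lsum (fun p => lsum (f p) Y) Y).
  { apply lsum_ext; intros p _. rewrite lsum_map. apply lsum_ext; intros q _.
    rewrite Hl, Hr. ring. }
  rewrite E1, E2, E3. ring.
Qed.

Lemma coef_sqnorm_app_le n X Y :
  coef_sqnorm n (X ++ Y) <= 2 * coef_sqnorm n X + 2 * coef_sqnorm n Y.
Proof.
  set (f := fun p q : R * R * (nat -> nat) => coef_dot p q * 1 * indic (eq_upto n (snd p) (snd q))).
  set (neg := fun p : R * R * (nat -> nat) => (- fst (fst p), - snd (fst p), snd p)).
  pose proof (coef_sqnorm_nonneg n (X ++ map neg Y)) as Hneg.
  pose proof (lsum_pairs_parallelogram f neg X Y) as Hpar.
  change (coef_sqnorm n ?l) with (lsum (fun p => lsum (f p) l) l) in *.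
  enough (lsum (fun p => lsum (f p) (X ++ Y)) (X ++ Y)
          + lsum (fun p => lsum (f p) (X ++ map neg Y)) (X ++ map neg Y)
          = 2 * lsum (fun p => lsum (f p) X) X + 2 * lsum (fun p => lsum (f p) Y) Y) by lra.
  apply Hpar; intros; unfold f, neg, coef_dot; simpl; ring.
Qed.

Lemma ladder_pred_pair x y :
  ladder x * ladder y * indic (Nat.eqb (pred x) (pred y)) = INR x / 2 * indic (Nat.eqb x y).
Proof.
  destruct x as [|x]; [rewrite ladder_0; change (INR 0) with 0; field|].
  destruct y as [|y]; [rewrite ladder_0; change (indic (Nat.eqb (S x) 0)) with 0; field|].
  change (Nat.eqb (S x) (S y)) with (Nat.eqb x y). cbn [pred].
  destruct (Nat.eqb_spec x y) as [<- | _]; [rewrite ladder_sq|]; unfold indic; field.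
Qed.

Lemma ladder_succ_pair x y :
  ladder (S x) * ladder (S y) * indic (Nat.eqb (S x) (S y)) = INR (S x) / 2 * indic (Nat.eqb x y).
Proof.
  change (Nat.eqb (S x) (S y)) with (Nat.eqb x y).
  destruct (Nat.eqb_spec x y) as [<- | _]; [rewrite ladder_sq|]; unfold indic; field.
Qed.

Lemma coef_sqnorm_lower n j l : (j < n)%nat ->
  coef_sqnorm n (map (lower_term j) l) = coef_form n (fun a => INR (a j) / 2) l.
Proof.
  intros Hj. unfold coef_sqnorm, coef_form. rewrite lsum_map.
  apply lsum_ext; intros p _. rewrite lsum_map. apply lsum_ext; intros q _.
  unfold lower_term; cbn [fst snd].
  rewrite eq_upto_upd_mi, (eq_upto_split n j (snd p)), !indic_andb by exact Hj.
  remember (indic (eq_upto n (upd_mi (snd p) j 0) (upd_mi (snd q) j 0))) as E.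
  transitivity (coef_dot p q
    * (ladder (snd p j) * ladder (snd q j) * indic (Nat.eqb (pred (snd p j)) (pred (snd q j))))
    * E); [unfold coef_dot; cbn [fst snd]; ring|].
  rewrite ladder_pred_pair. unfold coef_dot. field.
Qed.

Lemma coef_sqnorm_raise n j l : (j < n)%nat ->
  coef_sqnorm n (map (raise_term j) l) = coef_form n (fun a => INR (S (a j)) / 2) l.
Proof.
  intros Hj. unfold coef_sqnorm, coef_form. rewrite lsum_map.
  apply lsum_ext; intros p _. rewrite lsum_map. apply lsum_ext; intros q _.
  unfold raise_term; cbn [fst snd].
  rewrite eq_upto_upd_mi, (eq_upto_split n j (snd p)), !indic_andb by exact Hj.
  remember (indic (eq_upto n (upd_mi (snd p) j 0) (upd_mi (snd q) j 0))) as E.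
  transitivity (coef_dot p q
    * (ladder (S (snd p j)) * ladder (S (snd q j)) * indic (Nat.eqb (S (snd p j)) (S (snd q j))))
    * E); [unfold coef_dot; cbn [fst snd]; ring|].
  rewrite ladder_succ_pair. unfold coef_dot. field.
Qed.

Lemma mabs_ext n a b : (forall i, (i < n)%nat -> a i = b i) -> mabs n a = mabs n b.
Proof.
  induction n as [|n IH]; simpl; intros H; [reflexivity|].
  rewrite IH, H by auto with arith. reflexivity.
Qed.

Lemma le_mabs n j a : (j < n)%nat -> (a j <= mabs n a)%nat.
Proof.
  induction n as [|n IH]; simpl; intros Hj; [lia|].
  destruct (Nat.eq_dec j n) as [-> | Hne]; [lia|]. specialize (IH ltac:(lia)). lia.
Qed.

Lemma mabs_upd_mi n j a v : (j < n)%nat -> (mabs n (upd_mi a j v) + a j = mabs n a + v)%nat.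
Proof.
  induction n as [|n IH]; simpl; intros Hj; [lia|].
  destruct (Nat.eq_dec j n) as [-> | Hne].
  - rewrite upd_mi_same, (mabs_ext n (upd_mi a n v) a) by (intros; apply upd_mi_other; lia).
    lia.
  - rewrite upd_mi_other by lia. specialize (IH ltac:(lia)). lia.
Qed.

Lemma in_EN_pderiv_list n M j l : (j < n)%nat -> in_EN n M l -> in_EN n (S M) (pderiv_list j l).
Proof.
  unfold in_EN, pderiv_list. rewrite !Forall_forall. intros Hj Hl p Hp.
  apply in_app_or in Hp.
  destruct Hp as [Hp | Hp]; apply in_map_iff in Hp; destruct Hp as [q [<- Hq]];
    specialize (Hl q Hq); simpl in *.
  - pose proof (mabs_upd_mi n j (snd q) (pred (snd q j)) Hj). lia.
  - pose proof (mabs_upd_mi n j (snd q) (S (snd q j)) Hj). lia.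
Qed.

(* The lowered and raised parts carry the weights [a_j / 2] and [(a_j + 1) / 2]; doubling
   them for the cross terms gives [2 a_j + 1 <= 2 (M + 1)]. *)
Lemma coef_sqnorm_pderiv_le n M j l : (j < n)%nat -> in_EN n M l ->
  coef_sqnorm n (pderiv_list j l) <= 2 * INR (S M) * coef_sqnorm n l.
Proof.
  intros Hj HM. unfold pderiv_list.
  eapply Rle_trans; [apply coef_sqnorm_app_le|].
  rewrite coef_sqnorm_lower, coef_sqnorm_raise by exact Hj.
  rewrite <- coef_form_lin.
  replace (2 * INR (S M) * coef_sqnorm n l)
    with (coef_form n (fun _ => 2 * INR (S M) * 1 + 0 * 0) l)
    by (unfold coef_sqnorm; rewrite (coef_form_lin n (fun _ => 1) (fun _ => 0)); ring).
  apply coef_form_mono.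
  - intros p Hp. unfold in_EN in HM. rewrite Forall_forall in HM.
    pose proof (le_mabs n j (snd p) Hj). specialize (HM p Hp).
    assert (INR (snd p j) <= INR M) by (apply le_INR; lia).
    rewrite !S_INR. lra.
  - intros p q _ _ Hpq. rewrite eq_upto_spec in Hpq. rewrite (Hpq j Hj). split; reflexivity.
Qed.

Fixpoint twice_rising (M k : nat) : R :=
  match k with
  | O => 1
  | S k' => twice_rising M k' * (2 * INR (M + k))
  end.

Lemma twice_rising_pos M k : 0 < twice_rising M k.
Proof.
  induction k as [|k IH]; simpl; [lra|].
  apply Rmult_lt_0_compat; [exact IH|]. pose proof (lt_0_INR (M + S k) ltac:(lia)). lra.
Qed.

Lemma twice_rising_add M a b : twice_rising M a * twice_rising (M + a) b = twice_rising M (a + b).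
Proof.
  induction b as [|b IH]; simpl; [rewrite Nat.add_0_r; ring|].
  replace (a + S b)%nat with (S (a + b)) by lia. simpl. rewrite <- IH.
  replace (M + a + S b)%nat with (M + S (a + b))%nat by lia. ring.
Qed.

Lemma iter_pderiv_list_bound n M j k l : (j < n)%nat -> in_EN n M l ->
  in_EN n (M + k) (Nat.iter k (pderiv_list j) l) /\
  coef_sqnorm n (Nat.iter k (pderiv_list j) l) <= twice_rising M k * coef_sqnorm n l.
Proof.
  intros Hj HM. induction k as [|k [IHen IHle]]; simpl.
  - rewrite Nat.add_0_r. split; [exact HM | lra].
  - rewrite Nat.add_succ_r. split; [apply in_EN_pderiv_list; auto|].
    eapply Rle_trans; [apply (coef_sqnorm_pderiv_le n (M + k)); auto|].
    rewrite <- Nat.add_succ_r.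
    pose proof (pos_INR (M + S k)).
    replace (twice_rising M k * (2 * INR (M + S k)) * coef_sqnorm n l)
      with (2 * INR (M + S k) * (twice_rising M k * coef_sqnorm n l)) by ring.
    apply Rmult_le_compat_l; lra.
Qed.

Lemma dmulti_list_bound n k b : forall M l, (k <= n)%nat -> in_EN n M l ->
  in_EN n (M + mabs k b) (dmulti_list k b l) /\
  coef_sqnorm n (dmulti_list k b l) <= twice_rising M (mabs k b) * coef_sqnorm n l.
Proof.
  induction k as [|k IH]; intros M l Hk HM; simpl.
  - rewrite Nat.add_0_r. split; [exact HM | lra].
  - destruct (iter_pderiv_list_bound n M k (b k) l ltac:(lia) HM) as [Hen Hle].
    destruct (IH (M + b k)%nat _ ltac:(lia) Hen) as [Hen' Hle'].
    replace (M + (mabs k b + b k))%nat with (M + b k + mabs k b)%nat by lia.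
    split; [exact Hen'|].
    eapply Rle_trans; [exact Hle'|].
    rewrite (Nat.add_comm (mabs k b)), <- twice_rising_add.
    pose proof (twice_rising_pos (M + b k) (mabs k b)).
    replace (twice_rising M (b k) * twice_rising (M + b k) (mabs k b) * coef_sqnorm n l)
      with (twice_rising (M + b k) (mabs k b) * (twice_rising M (b k) * coef_sqnorm n l))
      by ring.
    apply Rmult_le_compat_l; lra.
Qed.

(** * The scalar estimate *)

Fixpoint capped_prod (k : nat) (Z : R) : R :=
  match k with
  | O => 1
  | S k' => capped_prod k' Z * Rmax 1 (Z / INR k)
  end.

Lemma capped_prod_full k Z : INR k <= Z -> capped_prod k Z = Z ^ k / INR (fact k).
Proof.
  induction k as [|k IH]; intros Hk; cbn [capped_prod]; [simpl; field|].
  pose proof (lt_0_INR _ (lt_O_fact k)). pose proof (lt_0_INR (S k) (Nat.lt_0_succ k)).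
  rewrite IH by (rewrite S_INR in Hk; lra).
  rewrite Rmax_right.
  - rewrite fact_simpl, mult_INR. change (Z ^ S k) with (Z * Z ^ k). field. lra.
  - apply Rmult_le_reg_r with (INR (S k)); [lra|].
    unfold Rdiv. rewrite Rmult_assoc, Rinv_l by lra. lra.
Qed.

(* The factors [Z / i] exceed 1 exactly for [i <= Z], so the product is a term of the
   exponential series. *)
Lemma capped_prod_le_exp k Z : 0 <= Z -> capped_prod k Z <= exp Z.
Proof.
  intros HZ.
  enough (exists m, capped_prod k Z = Z ^ m / INR (fact m)) as [m ->]
    by apply pow_div_fact_le_exp, HZ.
  induction k as [|k [m Hm]].
  - exists O. simpl. field.
  - destruct (Rle_dec (INR (S k)) Z) as [Hle | Hgt].
    + exists (S k). apply capped_prod_full, Hle.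
    + exists m. simpl. rewrite Hm, Rmax_left; [ring|].
      pose proof (lt_0_INR (S k) (Nat.lt_0_succ k)).
      apply Rmult_le_reg_r with (INR (S k)); [lra|].
      unfold Rdiv. rewrite Rmult_assoc, Rinv_l by lra. lra.
Qed.

Lemma capped_prod_pos k Z : 0 < capped_prod k Z.
Proof.
  induction k as [|k IH]; simpl; [lra|].
  apply Rmult_lt_0_compat; [exact IH|]. apply Rlt_le_trans with 1; [lra | apply Rmax_l].
Qed.

Lemma twice_N_plus_le N i delta : 0 < delta -> (0 < i)%nat ->
  2 * INR (N + i)
  <= 4 * delta ^ 2 * INR i ^ 2
     * (Rmax 1 (sqrt (INR N) / delta / INR i) ^ 2 * Rmax 1 (1 / delta ^ 2 / INR i)).
Proof.
  intros Hd Hi. apply lt_0_INR in Hi.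
  set (Y := sqrt (INR N) / delta / INR i). set (X := 1 / delta ^ 2 / INR i).
  assert (HY : 0 <= Y)
    by (apply Rdiv_le_0_compat; [apply Rdiv_le_0_compat; [apply sqrt_pos|]|]; lra).
  assert (HX : 0 <= X) by (apply Rdiv_le_0_compat; [apply Rdiv_le_0_compat; [|apply pow_lt]|]; lra).
  assert (E : 2 * INR (N + i) = 4 * delta ^ 2 * INR i ^ 2 * ((Y ^ 2 + X) / 2)).
  { unfold Y, X. rewrite plus_INR. unfold Rdiv.
    rewrite !Rpow_mult_distr, pow2_sqrt by apply pos_INR. field. lra. }
  rewrite E. apply Rmult_le_compat_l; [nra|].
  assert (HA : Y ^ 2 <= Rmax 1 Y ^ 2) by (apply pow_incr; split; [exact HY | apply Rmax_r]).
  pose proof (Rmax_l 1 Y). pose proof (Rmax_l 1 X). pose proof (Rmax_r 1 X).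
  assert (1 <= Rmax 1 Y ^ 2) by nra.
  nra.
Qed.

Lemma twice_rising_le N k delta : 0 < delta ->
  twice_rising N k
  <= (2 * delta) ^ (2 * k) * INR (fact k) ^ 2
     * (capped_prod k (sqrt (INR N) / delta) ^ 2 * capped_prod k (1 / delta ^ 2)).
Proof.
  intros Hd. induction k as [|k IH]; cbn [twice_rising capped_prod]; [simpl; lra|].
  pose proof (twice_N_plus_le N (S k) delta Hd (Nat.lt_0_succ k)) as Hstep.
  pose proof (twice_rising_pos N k).
  assert (0 <= 2 * INR (N + S k)) by (pose proof (pos_INR (N + S k)); lra).
  eapply Rle_trans; [apply Rmult_le_compat; [lra | lra | exact IH | exact Hstep]|].
  right. replace ((2 * delta) ^ (2 * S k)) with ((2 * delta) ^ (2 * k) * (4 * delta ^ 2))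
    by (replace (2 * S k)%nat with (2 + 2 * k)%nat by lia; rewrite pow_add; simpl; ring).
  rewrite fact_simpl, mult_INR. ring.
Qed.

Lemma sqrt_twice_rising_le N k delta : 0 < delta ->
  sqrt (twice_rising N k)
  <= exp (exp 1 / (2 * delta ^ 2)) * (2 * delta) ^ k * INR (fact k) * exp (sqrt (INR N) / delta).
Proof.
  intros Hd. set (Y := sqrt (INR N) / delta). set (X := 1 / delta ^ 2).
  assert (HY : 0 <= Y) by (apply Rdiv_le_0_compat; [apply sqrt_pos | lra]).
  assert (HX : 0 <= X) by (apply Rdiv_le_0_compat; [lra | apply pow_lt; lra]).
  set (B := (2 * delta) ^ k * INR (fact k) * exp Y * exp (X / 2)).
  assert (HB : 0 <= B).
  { unfold B. pose proof (exp_pos Y). pose proof (exp_pos (X / 2)).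
    pose proof (pos_INR (fact k)). pose proof (pow_le (2 * delta) k ltac:(lra)).
    repeat apply Rmult_le_pos; lra. }
  apply Rle_trans with B.
  - rewrite <- (sqrt_pow2 B HB). apply sqrt_le_1_alt.
    eapply Rle_trans; [apply twice_rising_le, Hd|]. fold Y X.
    replace (B ^ 2) with ((2 * delta) ^ (2 * k) * INR (fact k) ^ 2 * (exp Y ^ 2 * exp X)).
    2: { unfold B. rewrite Nat.mul_comm, pow_mult.
         replace (exp X) with (exp (X / 2) * exp (X / 2)) by (rewrite <- exp_plus; f_equal; field).
         simpl; ring. }
    pose proof (capped_prod_pos k Y). pose proof (capped_prod_pos k X).
    apply Rmult_le_compat_l; [pose proof (pow_le (2 * delta) (2 * k) ltac:(lra)); nra|].
    apply Rmult_le_compat; [apply pow2_ge_0 | lra | | apply capped_prod_le_exp, HX].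
    apply pow_incr. split; [lra | apply capped_prod_le_exp, HY].
  - assert (Hexp : exp (X / 2) <= exp (exp 1 / (2 * delta ^ 2))).
    { assert (Hle : X / 2 <= exp 1 / (2 * delta ^ 2)).
      { unfold X. pose proof (exp_ineq1_le 1).
        assert (0 < delta ^ 2) by (apply pow_lt; lra).
        apply Rmult_le_reg_r with (2 * delta ^ 2); [lra|].
        replace (1 / delta ^ 2 / 2 * (2 * delta ^ 2)) with 1 by (field; lra).
        replace (exp 1 / (2 * delta ^ 2) * (2 * delta ^ 2)) with (exp 1) by (field; lra). lra. }
      destruct (Rle_lt_or_eq_dec _ _ Hle) as [Hlt | ->];
        [left; apply exp_increasing, Hlt | right; reflexivity]. }
    unfold B.
    replace (exp (exp 1 / (2 * delta ^ 2)) * (2 * delta) ^ k * INR (fact k) * exp Y)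
      with ((2 * delta) ^ k * INR (fact k) * exp Y * exp (exp 1 / (2 * delta ^ 2))) by ring.
    apply Rmult_le_compat_l; [|exact Hexp].
    pose proof (exp_pos Y). pose proof (pos_INR (fact k)).
    pose proof (pow_le (2 * delta) k ltac:(lra)).
    repeat apply Rmult_le_pos; lra.
Qed.

Theorem mainTheorem10 :
  forall (n N : nat) (l : list (R * R * (nat -> nat))),
    in_EN n N l ->
    forall (delta : R), 0 < delta <= 1 ->
    forall (beta : nat -> nat),
      L2norm n (dmulti n beta (combo_re n l)) (dmulti n beta (combo_im n l))
      <= exp (exp 1 / (2 * delta ^ 2)) * (2 * delta) ^ (mabs n beta)
         * INR (fact (mabs n beta)) * exp (sqrt (INR N) / delta)
         * L2norm n (combo_re n l) (combo_im n l).
Proof.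
  intros n N l HN delta [Hdelta _] beta.
  change (combo_re n l) with (combo_with fst n l).
  change (combo_im n l) with (combo_with snd n l).
  rewrite !dmulti_combo by (exact (le_n n) || intros k a b; reflexivity).
  change (combo_with fst n ?L) with (combo_re n L).
  change (combo_with snd n ?L) with (combo_im n L).
  destruct L2norm_combo as [G [HG HL]]. rewrite !HL.
  destruct (dmulti_list_bound n n beta N l (le_n n) HN) as [_ Hbound].
  pose proof (pow_le G n HG). pose proof (coef_sqnorm_nonneg n l).
  pose proof (twice_rising_pos N (mabs n beta)).
  apply Rle_trans with (sqrt (twice_rising N (mabs n beta)) * sqrt (G ^ n * coef_sqnorm n l)).
  - rewrite <- sqrt_mult by (try apply Rmult_le_pos; lra).
    apply sqrt_le_1_alt.
    replace (twice_rising N (mabs n beta) * (G ^ n * coef_sqnorm n l))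
      with (G ^ n * (twice_rising N (mabs n beta) * coef_sqnorm n l)) by ring.
    apply Rmult_le_compat_l; assumption.
  - apply Rmult_le_compat_r; [apply sqrt_pos | apply sqrt_twice_rising_le, Hdelta].
Qed.
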